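(* For real $\eta\ge0$ let $$w(\eta)=\frac{1}{8}\mathbb{I}+\frac{\eta}{4}\Big(V_{(AB)}-\tfrac{\mathbb{I}}{2}\Big)+\frac{\eta}{4}\Big(V_{(AC)}-\tfrac{\mathbb{I}}{2}\Big)+\frac{\eta}{4}\Big(V_{(BC)}-\tfrac{\mathbb{I}}{2}\Big)$$ on $(\mathbb{C}^2)^{\otimes3}$. Then $w(\eta)$ is local-positive if and only if $\eta\le\frac{2}{3}$. Moreover each bipartite reduction of $w(\eta)$ equals $(1-\eta)\frac{\mathbb{I}}{4}+\eta\frac{V}{2}$.
   Context: $V_{(XY)}$ swaps tensor factors $X,Y\in\{A,B,C\}$; $V$ is the swap on $\mathbb{C}^2\otimes\mathbb{C}^2$. An operator $M$ on $(\mathbb{C}^2)^{\otimes3}$ is local-positive if $\langle\psi_1\psi_2\psi_3|M|\psi_1\psi_2\psi_3\rangle\ge0$ for all unit vectors $\psi_i\in\mathbb{C}^2$. *)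

From HB Require Import structures.
From mathcomp Require Import all_boot all_order all_algebra.
Set Implicit Arguments. Unset Strict Implicit. Unset Printing Implicit Defensive.
Import Order.TTheory GRing.Theory Num.Theory.
Local Open Scope ring_scope.

(* Conventions: (C^2)^{(x)3} is identified with C^8 via the computational basis
   |a b c> <-> index 4a+2b+c (a = qubit A, b = qubit B, c = qubit C);
   C^2 (x) C^2 with C^4 via |x y> <-> 2x+y. *)

Definition bitA (k : 'I_8) : nat := (k %/ 4)%N.
Definition bitB (k : 'I_8) : nat := ((k %/ 2) %% 2)%N.
Definition bitC (k : 'I_8) : nat := (k %% 2)%N.
Definition bit1 (k : 'I_4) : nat := (k %/ 2)%N.
Definition bit2 (k : 'I_4) : nat := (k %% 2)%N.
Definition idx3 (a b c : nat) : 'I_8 := inord (4 * a + 2 * b + c)%N.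

Section Ops.
Variable C : numClosedFieldType.

Definition V_AB : 'M[C]_8 := \matrix_(i, j)
  ((bitA i == bitB j) && (bitB i == bitA j) && (bitC i == bitC j))%:R.
Definition V_AC : 'M[C]_8 := \matrix_(i, j)
  ((bitA i == bitC j) && (bitC i == bitA j) && (bitB i == bitB j))%:R.
Definition V_BC : 'M[C]_8 := \matrix_(i, j)
  ((bitB i == bitC j) && (bitC i == bitB j) && (bitA i == bitA j))%:R.

Definition V2 : 'M[C]_4 := \matrix_(i, j)
  ((bit1 i == bit2 j) && (bit2 i == bit1 j))%:R.

Definition prod3 (p1 p2 p3 : 'cV[C]_2) : 'cV[C]_8 :=
  \col_k (p1 (inord (bitA k)) 0 * p2 (inord (bitB k)) 0 * p3 (inord (bitC k)) 0).

Definition adj {m n} (A : 'M[C]_(m, n)) : 'M[C]_(n, m) := (map_mx (@Num.conj C) A)^T.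

Definition unit_vec (p : 'cV[C]_2) : Prop := (adj p *m p) 0 0 = 1.

Definition local_positive (M : 'M[C]_8) : Prop :=
  forall p1 p2 p3 : 'cV[C]_2, unit_vec p1 -> unit_vec p2 -> unit_vec p3 ->
    0 <= (adj (prod3 p1 p2 p3) *m M *m prod3 p1 p2 p3) 0 0.

Definition red_AB (M : 'M[C]_8) : 'M[C]_4 := \matrix_(i, j)
  \sum_(c < 2) M (idx3 (bit1 i) (bit2 i) c) (idx3 (bit1 j) (bit2 j) c).
Definition red_AC (M : 'M[C]_8) : 'M[C]_4 := \matrix_(i, j)
  \sum_(b < 2) M (idx3 (bit1 i) b (bit2 i)) (idx3 (bit1 j) b (bit2 j)).
Definition red_BC (M : 'M[C]_8) : 'M[C]_4 := \matrix_(i, j)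
  \sum_(a < 2) M (idx3 a (bit1 i) (bit2 i)) (idx3 a (bit1 j) (bit2 j)).

Definition w (eta : C) : 'M[C]_8 :=
  8^-1 *: 1%:M
  + (eta / 4) *: (V_AB - 2^-1 *: 1%:M)
  + (eta / 4) *: (V_AC - 2^-1 *: 1%:M)
  + (eta / 4) *: (V_BC - 2^-1 *: 1%:M).

End Ops.

(* For a unit vector psi of C^2 with Bloch vector r(psi) in R^3 one has
   |<psi, phi>|^2 = (1 + r(psi).r(phi)) / 2.  The swaps permute the factors of a
   product vector, so the expectation of w(eta) in psi1 psi2 psi3 is
   1/8 + eta/4 * sum_{i<j} (|<psi_i, psi_j>|^2 - 1/2)
     = (2 - 3 eta)/16 + eta/16 * |r1 + r2 + r3|^2.
   This is nonnegative for every product state iff 2 - 3 eta >= 0, the extreme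
   case being three Bloch vectors at 120 degrees in a plane. *)

From HB Require Import structures.
From mathcomp Require Import all_boot all_order all_algebra ring.
Import Order.TTheory GRing.Theory Num.Theory.
Local Open Scope ring_scope.

Ltac eval_indices := repeat match goal with
  | |- context [idx3 ?a ?b ?c] =>
      let n := eval vm_compute in (4 * a + 2 * b + c)%N in
      rewrite (_ : idx3 a b c = @Ordinal 8 n isT); last by apply/val_inj; rewrite /= inordK
  | |- context [nat_of_bool ?b] =>
      lazymatch b with true => fail | false => fail | _ =>
      let v := eval vm_compute in b in
      lazymatch v with true => change b with true | false => change b with false end end
  | |- context [bitA ?k] => let v := eval vm_compute in (bitA k) in change (bitA k) with v
  | |- context [bitB ?k] => let v := eval vm_compute in (bitB k) in change (bitB k) with v
  | |- context [bitC ?k] => let v := eval vm_compute in (bitC k) in change (bitC k) with v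
  | |- context [bit1 ?k] => let v := eval vm_compute in (bit1 k) in change (bit1 k) with v
  | |- context [bit2 ?k] => let v := eval vm_compute in (bit2 k) in change (bit2 k) with v
  end.

Section ThreeQubits.
Variable C : numClosedFieldType.
Implicit Types (p q : 'cV[C]_2) (eta : C).

Definition dotc p q : C := (adj p *m q) 0 0.

Lemma dotcE p q :
  dotc p q = (p (inord 0) 0)^* * q (inord 0) 0 + (p (inord 1) 0)^* * q (inord 1) 0.
Proof.
have i0 : ord0 = inord 0 :> 'I_2 by apply/val_inj; rewrite /= inordK.
have i1 : lift ord0 ord0 = inord 1 :> 'I_2 by apply/val_inj; rewrite /= inordK.
by rewrite /dotc !mxE !big_ord_recl big_ord0 !mxE addr0 i1 i0.
Qed.

Lemma adj_prod3_mul_prod3 (p1 p2 p3 q1 q2 q3 : 'cV[C]_2) :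
  adj (prod3 p1 p2 p3) *m prod3 q1 q2 q3 = (dotc p1 q1 * dotc p2 q2 * dotc p3 q3)%:M.
Proof.
apply/matrixP => i j; rewrite !ord1 [RHS]mxE mulr1n !dotcE.
rewrite !mxE !big_ord_recl big_ord0 !mxE; eval_indices; rewrite !rmorphM /=; ring.
Qed.

Lemma mul_V_AB_prod3 p1 p2 p3 : V_AB C *m prod3 p1 p2 p3 = prod3 p2 p1 p3.
Proof.
apply/matrixP => i k; rewrite !mxE !big_ord_recl big_ord0.
by case: i => [[|[|[|[|[|[|[|[|//]]]]]]]] ?]; rewrite !mxE; eval_indices; rewrite /=; ring.
Qed.

Lemma mul_V_AC_prod3 p1 p2 p3 : V_AC C *m prod3 p1 p2 p3 = prod3 p3 p2 p1.
Proof.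
apply/matrixP => i k; rewrite !mxE !big_ord_recl big_ord0.
by case: i => [[|[|[|[|[|[|[|[|//]]]]]]]] ?]; rewrite !mxE; eval_indices; rewrite /=; ring.
Qed.

Lemma mul_V_BC_prod3 p1 p2 p3 : V_BC C *m prod3 p1 p2 p3 = prod3 p1 p3 p2.
Proof.
apply/matrixP => i k; rewrite !mxE !big_ord_recl big_ord0.
by case: i => [[|[|[|[|[|[|[|[|//]]]]]]]] ?]; rewrite !mxE; eval_indices; rewrite /=; ring.
Qed.

Definition overlap p q : C := dotc p q * dotc q p.

Lemma w_expectation_overlaps eta p1 p2 p3 :
  unit_vec p1 -> unit_vec p2 -> unit_vec p3 ->
  (adj (prod3 p1 p2 p3) *m w eta *m prod3 p1 p2 p3) 0 0 =
  8^-1 - 3 * eta / 8 + eta / 4 * (overlap p1 p2 + overlap p1 p3 + overlap p2 p3).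
Proof.
move=> u1 u2 u3; rewrite /w -!mulmxA.
rewrite !(mulmxDl, mulmxBl, mulNmx, =^~scalemxAl, mul1mx).
rewrite mul_V_AB_prod3 mul_V_AC_prod3 mul_V_BC_prod3.
rewrite !mulmxDr -!scalemxAr !mulmxBr -!scalemxAr !adj_prod3_mul_prod3 !mxE /= !mulr1n.
rewrite (u1 : dotc p1 p1 = 1) (u2 : dotc p2 p2 = 1) (u3 : dotc p3 p3 = 1) /overlap.
by field.
Qed.

(* A quarter of |r1 + r2 + r3|^2 for the Bloch vectors r_i of (x_i, y_i): the
   first term is the z-component, the second the x- and y-components. *)
Definition bloch_sum_sq (x1 y1 x2 y2 x3 y3 : C) : C :=
  let a := x1^* * x1 + x2^* * x2 + x3^* * x3 in
  let d := y1^* * y1 + y2^* * y2 + y3^* * y3 in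
  let z := x1 * y1^* + x2 * y2^* + x3 * y3^* in
  (a - d) * (a - d)^* / 4 + z * z^*.

Lemma bloch_sum_sq_ge0 x1 y1 x2 y2 x3 y3 : 0 <= bloch_sum_sq x1 y1 x2 y2 x3 y3.
Proof. by rewrite addr_ge0 ?divr_ge0 ?mul_conjC_ge0 ?ler0n. Qed.

Lemma overlap_sum_bloch x1 y1 x2 y2 x3 y3 :
  let n1 := x1^* * x1 + y1^* * y1 in
  let n2 := x2^* * x2 + y2^* * y2 in
  let n3 := x3^* * x3 + y3^* * y3 in
  (x1^* * x2 + y1^* * y2) * (x2^* * x1 + y2^* * y1)
  + (x1^* * x3 + y1^* * y3) * (x3^* * x1 + y3^* * y1)
  + (x2^* * x3 + y2^* * y3) * (x3^* * x2 + y3^* * y2)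
  = (n1 + n2 + n3) ^+ 2 / 4 - (n1 ^+ 2 + n2 ^+ 2 + n3 ^+ 2) / 2
    + bloch_sum_sq x1 y1 x2 y2 x3 y3.
Proof.
rewrite /bloch_sum_sq /= !(rmorphD, rmorphM, rmorphB, rmorphN) /= !conjCK.
by field.
Qed.

Lemma unit_vecE p :
  unit_vec p <-> (p (inord 0) 0)^* * p (inord 0) 0 + (p (inord 1) 0)^* * p (inord 1) 0 = 1.
Proof. by rewrite -dotcE. Qed.

Lemma w_expectation eta p1 p2 p3 :
  unit_vec p1 -> unit_vec p2 -> unit_vec p3 ->
  (adj (prod3 p1 p2 p3) *m w eta *m prod3 p1 p2 p3) 0 0 =
  (2 - 3 * eta) / 16 + eta / 4 * bloch_sum_sq (p1 (inord 0) 0) (p1 (inord 1) 0)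
    (p2 (inord 0) 0) (p2 (inord 1) 0) (p3 (inord 0) 0) (p3 (inord 1) 0).
Proof.
move=> u1 u2 u3; rewrite w_expectation_overlaps // /overlap !dotcE overlap_sum_bloch /=.
move/unit_vecE: u1 => ->; move/unit_vecE: u2 => ->; move/unit_vecE: u3 => ->.
by field.
Qed.

Lemma w_local_positive eta : 0 <= eta -> eta <= 2 / 3 -> local_positive (w eta).
Proof.
move=> eta_ge0 eta_le p1 p2 p3 u1 u2 u3; rewrite w_expectation //.
apply: addr_ge0; last by rewrite mulr_ge0 ?divr_ge0 ?ler0n ?bloch_sum_sq_ge0.
by rewrite divr_ge0 ?ler0n // subr_ge0 mulrC -ler_pdivlMr ?ltr0n.
Qed.

Definition vec2 (a b : C) : 'cV[C]_2 := \col_i (if i == 0 :> nat then a else b).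

Lemma vec2_unit (a b : C) : a^* * a + b^* * b = 1 -> unit_vec (vec2 a b).
Proof. by rewrite unit_vecE !mxE !inordK. Qed.

Lemma local_positive_w_le eta : local_positive (w eta) -> eta <= 2 / 3.
Proof.
(* The trine states (1, 0) and (1/2, +-sqrt 3 / 2): Bloch vectors at 120 degrees
   in the xz-plane, so bloch_sum_sq vanishes. *)
pose s := sqrtC (3 : C).
have s_real : s^* = s by rewrite conj_Creal // ger0_real // sqrtC_ge0 ler0n.
have half_real : (2^-1 : C)^* = 2^-1 by rewrite conj_Creal // realV realn.
have s_half_sq : s / 2 * (s / 2) = 3 / 4 by rewrite mulrACA -expr2 sqrtCK; field.
have u1 : unit_vec (vec2 1 0) by apply: vec2_unit; rewrite conjC1 conjC0; ring.
have u2 : unit_vec (vec2 2^-1 (s / 2)).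
  by apply: vec2_unit; rewrite rmorphM /= s_real half_real s_half_sq; field.
have u3 : unit_vec (vec2 2^-1 (- (s / 2))).
  by apply: vec2_unit; rewrite rmorphN rmorphM /= s_real half_real mulrNN s_half_sq; field.
move=> /(_ _ _ _ u1 u2 u3); rewrite w_expectation // !mxE !inordK //=.
have -> : bloch_sum_sq 1 0 2^-1 (s / 2) 2^-1 (- (s / 2)) = 0.
  rewrite /bloch_sum_sq /= conjC1 conjC0 !rmorphN !rmorphM /= s_real half_real.
  by rewrite mulrNN s_half_sq; field.
rewrite mulr0 addr0 pmulr_lge0 ?invr_gt0 ?ltr0n // subr_ge0 => le_3eta_2.
by rewrite ler_pdivlMr ?ltr0n // mulrC.
Qed.

Lemma w_reductions eta :
  let target := (1 - eta) / 4 *: (1%:M : 'M[C]_4) + eta / 2 *: V2 C in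
  [/\ red_AB (w eta) = target, red_AC (w eta) = target & red_BC (w eta) = target].
Proof.
split; apply/matrixP => i j; rewrite /w !mxE !big_ord_recl big_ord0 !mxE.
all: case: i => [[|[|[|[|//]]]] ?]; case: j => [[|[|[|[|//]]]] ?].
all: by eval_indices; rewrite /=; field.
Qed.

End ThreeQubits.

Theorem mainTheorem13 (C : numClosedFieldType) (eta : C) (heta : 0 <= eta) :
  (local_positive (w eta) <-> eta <= 2 / 3) /\
  (let target := (1 - eta) / 4 *: (1%:M : 'M[C]_4) + eta / 2 *: V2 C in
   [/\ red_AB (w eta) = target, red_AC (w eta) = target & red_BC (w eta) = target]).
Proof.
split; last exact: w_reductions.
by split; [exact: local_positive_w_le | exact: w_local_positive].
Qed.
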